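(* Let $n$ and $b$ be integers with $1\le b<\frac{n}{2}-1$, and let $BT\in\mathcal{CT}^*_{n,b}$. Then \[ M_1(BT)\le\begin{cases}2(2n+3b-3) & \text{if } 1\le b<\frac{n-2}{3},\\ 2(4n-3b-7) & \text{if } \frac{n-2}{3}\le b<\frac{n}{2}-1.\end{cases} \] For $1\le b<\frac{n-2}{3}$, equality holds if and only if $BT$ has degree sequence consisting of $b$ entries $4$, $n-3b-2$ entries $2$ and $2b+2$ entries $1$. For $\frac{n-2}{3}\le b<\frac{n}{2}-1$, equality holds if and only if $BT$ has degree sequence consisting of $n-2b-2$ entries $4$, $3b-n+2$ entries $3$ and $n-b$ entries $1$.
   Context: A chemical tree is a tree with maximum degree at most $4$. A branching vertex is a vertex of degree greater than $2$. $\mathcal{CT}^*_{n,b}$ denotes the class of all $n$-vertex chemical trees with exactly $b$ branching vertices. The first Zagreb index is $M_1(G)=\sum_{v\in V(G)}d_v^2$, where $d_v$ is the degree of $v$. *)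

From mathcomp Require Import all_boot.
Set Implicit Arguments. Unset Strict Implicit. Unset Printing Implicit Defensive.

Section Graphs.
Variable n : nat.
Variable e : rel 'I_n.

Definition simple_graph : Prop := symmetric e /\ irreflexive e.

Definition deg (v : 'I_n) : nat := #|[set u | e v u]|.

Definition connected_graph : Prop := forall u v : 'I_n, connect e u v.

Definition acyclic_graph : Prop :=
  forall s : seq 'I_n, uniq s -> 2 < size s -> ~~ cycle e s.

Definition is_tree : Prop := simple_graph /\ connected_graph /\ acyclic_graph.

Definition chemical_tree : Prop := is_tree /\ forall v, deg v <= 4.

Definition n_branching : nat := #|[set v | 2 < deg v]|.

Definition n_deg (k : nat) : nat := #|[set v | deg v == k]|.

Definition M1 : nat := \sum_(v < n) deg v ^ 2.
End Graphs.

(** Writing [n_k] for the number of vertices of degree [k], a chemical tree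
    on [n >= 2] vertices has [n = n_1 + n_2 + n_3 + n_4], [b = n_3 + n_4],
    [M_1 = n_1 + 4 n_2 + 9 n_3 + 16 n_4] and, having [n - 1] edges,
    [n_1 + 2 n_2 + 3 n_3 + 4 n_4 <= 2 (n - 1)].  Maximizing [M_1] under these
    constraints is linear arithmetic: for small [b] the optimum has all
    branching vertices of degree 4 and all others of degree 2 or 1; for large
    [b] there are too few vertices for that and the optimum has no vertex of
    degree 2.  The edge bound follows by deleting leaves one at a time; a leaf
    exists because in a finite acyclic graph of minimum degree 2 a path could
    always be extended to a longer one. *)
From mathcomp Require Import all_boot zify.
Set Implicit Arguments. Unset Strict Implicit. Unset Printing Implicit Defensive.

(* The deleted vertex stays in ['I_n] as an isolated vertex; the set [S]
   below keeps track of the vertices that still carry edges. *)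
Definition del_vertex n (f : rel 'I_n) (v : 'I_n) : rel 'I_n :=
  [rel u w | [&& f u w, u != v & w != v]].

Lemma card_set_sum_nat n (P : pred 'I_n) : #|[set v | P v]| = \sum_(v < n) (P v : nat).
Proof. by rewrite -sum1dep_card big_mkcond; apply: eq_bigr => v _; case: (P v). Qed.

Section Forest.
Variables (n : nat) (f : rel 'I_n).
Hypotheses (f_sym : symmetric f) (f_irr : irreflexive f) (f_acyc : acyclic_graph f).

Lemma acyclic_path_neighbor y rest z :
  uniq (y :: rest) -> path f y rest -> z \in rest -> f y z -> z = head y rest.
Proof.
move=> U P zr fyz; move: U P; case/splitPr: zr => -[//|a p1] p2 U P.
have Ucyc : uniq (y :: rcons (a :: p1) z).
  apply: subseq_uniq U; rewrite -cats1 -!cat_cons.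
  by apply: cat_subseq; [exact: subseq_refl | rewrite sub1seq mem_head].
have size_gt2 : 2 < size (y :: rcons (a :: p1) z) by rewrite /= size_rcons.
move/negP: (f_acyc Ucyc size_gt2); case.
rewrite /cycle rcons_path last_rcons f_sym fyz andbT rcons_path.
by move: P; rewrite cat_path /= => /and3P[-> ->].
Qed.

Section SupportedOn.
Variable S : {set 'I_n}.
Hypothesis f_supp : forall u w, f u w -> u \in S.

Lemma long_path_of_deg_ge2 :
  (forall v, v \in S -> 2 <= deg f v) -> S != set0 -> forall k,
  exists y rest, [/\ uniq (y :: rest), size rest = k, path f y rest & y \in S].
Proof.
move=> deg2 /set0Pn[x xS]; elim=> [|k [y [rest [U Sz P yS]]]].
  by exists x, [::].
set h := head y rest.
have : 0 < #|[set u | f y u] :\ h|.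
  by move: (deg2 _ yS); rewrite /deg (cardsD1 h); case: (h \in _) => /=; lia.
case/card_gt0P => z; rewrite !inE => /andP[zh fyz].
have zNpath : z \notin y :: rest.
  rewrite inE negb_or; apply/andP; split.
    by apply: contraTneq fyz => ->; rewrite f_irr.
  by apply: contra zh => zr; rewrite (acyclic_path_neighbor U P zr fyz).
exists z, (y :: rest); rewrite cons_uniq zNpath U /= f_sym fyz P Sz.
by split=> //; apply: (@f_supp z y); rewrite f_sym.
Qed.

Lemma exists_leaf : S != set0 -> exists2 v, v \in S & deg f v <= 1.
Proof.
move=> S0; apply/exists_inP; apply: contraT => /exists_inPn noleaf.
have deg2 v : v \in S -> 2 <= deg f v by move/noleaf; rewrite ltnNge.
have [y [rest [/card_uniqP U Sz _ _]]] := long_path_of_deg_ge2 deg2 S0 n.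
by have := max_card (mem (y :: rest)); rewrite card_ord U /= Sz ltnn.
Qed.

End SupportedOn.

Lemma del_vertex_sym v : symmetric (del_vertex f v).
Proof. by move=> u w; rewrite /del_vertex /= f_sym [(u != v) && _]andbC. Qed.

Lemma del_vertex_irr v : irreflexive (del_vertex f v).
Proof. by move=> u; rewrite /del_vertex /= f_irr. Qed.

Lemma del_vertex_acyclic v : acyclic_graph (del_vertex f v).
Proof.
move=> s Us Ss; apply: contra (f_acyc Us Ss).
by apply: sub_cycle => u w /and3P[].
Qed.

Lemma sum_deg_del_vertex v :
  \sum_(u < n) deg f u = \sum_(u < n) deg (del_vertex f v) u + 2 * deg f v.
Proof.
have deg_split u :
    deg f u = f u v + deg (del_vertex f v) u + (if u == v then deg f v else 0).
  case: eqVneq => [->|uv] /=.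
    suff -> : deg (del_vertex f v) v = 0 by rewrite f_irr.
    by apply: eq_card0 => w; rewrite !inE /del_vertex /= eqxx andbF.
  rewrite addn0 /deg (cardsD1 v) inE; congr (_ + _); apply: eq_card => w.
  by rewrite !inE /del_vertex /= uv; case: (w != v); case: (f u w).
have sum_adj : \sum_(u < n) (f u v : nat) = deg f v.
  by rewrite /deg card_set_sum_nat; apply: eq_bigr => u _; rewrite f_sym.
rewrite (eq_bigr _ (fun u _ => deg_split u)) !big_split /= -(big_mkcond (pred1 v)) big_pred1_eq.
by rewrite sum_adj; lia.
Qed.

End Forest.

Lemma forest_sum_deg_le n k (f : rel 'I_n) (S : {set 'I_n}) :
  #|S| = k -> symmetric f -> irreflexive f -> acyclic_graph f ->
  (forall u w, f u w -> u \in S) ->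
  \sum_(u < n) deg f u <= 2 * (k - 1).
Proof.
elim: k f S => [|k IH] f S cardS fsym firr facyc fsupp.
  rewrite big1 // => u _; apply: eq_card0 => w; rewrite inE.
  by apply: contraFF (fsupp u w) _; rewrite (cards0_eq cardS) inE.
have S0 : S != set0 by rewrite -card_gt0 cardS.
have [v vS leaf_v] := exists_leaf fsym firr facyc fsupp S0.
have cardSv : #|S :\ v| = k by move: cardS; rewrite (cardsD1 v) vS => -[].
have suppSv u w : del_vertex f v u w -> u \in S :\ v.
  by case/and3P=> fuw uv _; rewrite in_setD1 uv (fsupp _ _ fuw).
have := IH _ _ cardSv (del_vertex_sym fsym v) (del_vertex_irr firr v)
  (del_vertex_acyclic facyc v) suppSv.
have k_gt0 : 0 < deg f v -> 0 < k.
  case/card_gt0P => w; rewrite inE => fvw; rewrite -cardSv; apply/card_gt0P.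
  exists w; rewrite in_setD1 (fsupp w v) ?andbT; last by rewrite fsym.
  by apply: contraTneq fvw => ->; rewrite firr.
by rewrite (sum_deg_del_vertex fsym firr v); lia.
Qed.

Lemma tree_sum_deg_le n (e : rel 'I_n) :
  is_tree e -> \sum_(u < n) deg e u <= 2 * (n - 1).
Proof.
case=> [[esym eirr] [_ eacyc]].
apply: (@forest_sum_deg_le n n e setT) => //; first by rewrite cardsT card_ord.
by move=> u w _; rewrite in_setT.
Qed.

Lemma connected_deg_gt0 n (e : rel 'I_n) (v : 'I_n) :
  1 < n -> connected_graph e -> 0 < deg e v.
Proof.
move=> n_gt1 econn.
have [u] : exists u, u \in predC1 v by apply/card_gt0P; rewrite cardC1 card_ord; lia.
rewrite !inE => uv; case/connectP: (econn v u) => -[/= _ uv'|a p /= /andP[eva _] _].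
  by rewrite uv' eqxx in uv.
by apply/card_gt0P; exists a; rewrite inE.
Qed.

Lemma sum_by_value n m (g : 'I_n -> nat) (F : nat -> nat) :
  (forall v, g v < m) ->
  \sum_(v < n) F (g v) = \sum_(k < m) F k * #|[set v | g v == k]|.
Proof.
move=> g_lt; transitivity (\sum_(v < n) \sum_(k < m) (g v == k) * F k).
  apply: eq_bigr => v _; rewrite (bigD1 (Ordinal (g_lt v))) //= eqxx mul1n.
  rewrite big1 ?addn0 // => k kv; rewrite eq_sym.
  by move: kv; rewrite -val_eqE /= => /negbTE->.
rewrite exchange_big; apply: eq_bigr => k _.
by rewrite -big_distrl mulnC card_set_sum_nat.
Qed.

Lemma card_set_by_value n m (g : 'I_n -> nat) (P : pred nat) :
  (forall v, g v < m) ->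
  #|[set v | P (g v)]| = \sum_(k < m) P k * #|[set v | g v == k]|.
Proof.
by move=> g_lt; rewrite card_set_sum_nat (sum_by_value (fun k => P k : nat) g_lt).
Qed.

Lemma chemical_degree_counts_bound n1 n2 n3 n4 n b M :
  n = n1 + n2 + n3 + n4 -> n1 + 2 * n2 + 3 * n3 + 4 * n4 <= 2 * (n - 1) ->
  b = n3 + n4 -> M = n1 + 4 * n2 + 9 * n3 + 16 * n4 ->
  1 <= b -> 2 * b + 2 < n ->
  (3 * b + 2 < n ->
     M <= 2 * (2 * n + 3 * b - 3) /\
     (M = 2 * (2 * n + 3 * b - 3) <->
        [/\ n4 = b, n2 = n - 3 * b - 2 & n1 = 2 * b + 2]))
  /\
  (n <= 3 * b + 2 ->
     M <= 2 * (4 * n - 3 * b - 7) /\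
     (M = 2 * (4 * n - 3 * b - 7) <->
        [/\ n4 = n - 2 * b - 2, n3 = 3 * b + 2 - n & n1 = n - b])).
Proof.
move=> *; split=> ?; (split; [lia | split; [by move=> ?; split; lia | case=> *; lia]]).
Qed.

Theorem theorem3 (n b : nat) (e : rel 'I_n) :
  chemical_tree e -> n_branching e = b ->
  1 <= b -> 2 * b + 2 < n ->
  (3 * b + 2 < n ->
     M1 e <= 2 * (2 * n + 3 * b - 3) /\
     (M1 e = 2 * (2 * n + 3 * b - 3) <->
        [/\ n_deg e 4 = b, n_deg e 2 = n - 3 * b - 2 & n_deg e 1 = 2 * b + 2]))
  /\
  (n <= 3 * b + 2 ->
     M1 e <= 2 * (4 * n - 3 * b - 7) /\
     (M1 e = 2 * (4 * n - 3 * b - 7) <->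
        [/\ n_deg e 4 = n - 2 * b - 2, n_deg e 3 = 3 * b + 2 - n & n_deg e 1 = n - b])).
Proof.
move=> [etree deg_le4] branchE b_ge1 n_gt.
have deg_lt5 v : deg e v < 5 by rewrite ltnS deg_le4.
have no_isolated : n_deg e 0 = 0.
  apply: eq_card0 => v; rewrite inE -leqn0 leqNgt connected_deg_gt0 //; first by lia.
  by case: etree => _ [].
have count_n : n = \sum_(k < 5) 1 * n_deg e k.
  by rewrite -(sum_by_value (fun=> 1) deg_lt5) sum1_card card_ord.
have handshake : \sum_(k < 5) k * n_deg e k <= 2 * (n - 1).
  by rewrite -(sum_by_value id deg_lt5); exact: tree_sum_deg_le.
have M1E : M1 e = \sum_(k < 5) k ^ 2 * n_deg e k.
  exact: (sum_by_value (fun k => k ^ 2) deg_lt5).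
have {}branchE : b = \sum_(k < 5) (2 < k) * n_deg e k.
  by rewrite -branchE; exact: (card_set_by_value (fun k => 2 < k) deg_lt5).
move: count_n handshake M1E branchE; rewrite !big_ord_recr !big_ord0 /= no_isolated.
by move=> *; apply: chemical_degree_counts_bound; lia.
Qed.
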